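(* For each prime $p$, we have $\mathcal U_p=\bigcup_{k\ge1}\mathcal U_{p,k}$.
   Context: For a prime $p$, $\mathcal U_p$ is the set of positive integers that divide $p^n+1$ for some positive integer $n$. For coprime integers $a,b$ with $b>0$, $\ell_a(b)$ is the multiplicative order of $a$ modulo $b$; $v_l(n)$ is the exponent of the prime $l$ in $n$. For a prime $p$ and positive integer $k$, $\mathcal U_{p,k}$ is the set of positive integers $d$ coprime to $p$ such that: for each odd prime $r\mid d$ we have $v_2(\ell_p(r))=k$; if $p>2$ and $k=1$ then $v_2(d)\le v_2(p+1)$; and if $p>2$ and $k>1$ then $v_2(d)\le 1$. *)

From mathcomp Require Import all_boot.
Set Implicit Arguments. Unset Strict Implicit. Unset Printing Implicit Defensive.

(* Multiplicative order ell_a(b) of a modulo b: the least n >= 1 with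
   a^n = 1 (mod b), searched in 1..b (which suffices whenever
   coprime a b and b > 0, as the order is <= totient b <= b). *)
Definition mult_ord (a b : nat) : nat :=
  (find (fun n => a ^ n.+1 == 1 %[mod b]) (iota 0 b)).+1.

Definition U (p d : nat) : Prop :=
  0 < d /\ exists n, 0 < n /\ d %| p ^ n + 1.

Definition Uk (p k d : nat) : Prop :=
  [/\ 0 < d, coprime d p,
      (forall r, prime r -> odd r -> r %| d -> logn 2 (mult_ord p r) = k),
      (2 < p -> k = 1 -> logn 2 d <= logn 2 p.+1)
    & (2 < p -> 1 < k -> logn 2 d <= 1)].

From mathcomp Require Import all_boot cyclic zify.
Set Implicit Arguments. Unset Strict Implicit. Unset Printing Implicit Defensive.

(* An odd prime r coprime to p divides p^n + 1 iff ord_r(p) divides 2n but not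
   n, i.e. iff v_2(ord_r p) = v_2(n) + 1; so all odd prime divisors of an
   element of U_p share k = v_2(n) + 1, while its 2-part is bounded by
   v_2(p^n + 1), which is v_2(p + 1) for odd n and 1 for even n.
   Conversely, for d = 2^a m in U_{p,k} with m odd, take n = u 2^(k-1) where u
   is the odd part of phi(m).  Every prime divisor of m divides p^n + 1 by the
   criterion above.  For large t, m divides
   p^(n 2^t) - 1 = (p^n - 1) (p^n + 1) prod_(0<j<t) (p^(n 2^j) + 1),
   and is coprime to every factor but p^n + 1, hence divides p^n + 1; the
   2-part is covered by the two valuations above. *)

Lemma totient_leq n : totient n <= n.
Proof.
rewrite totient_count_coprime -[n in _ <= n]subn0 -[n - 0]muln1 -sum_nat_const_nat.
by apply: leq_sum => i _; apply: leq_b1.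
Qed.

Lemma mult_ord_dvdP a b n :
  coprime a b -> (a ^ n == 1 %[mod b]) = (mult_ord a b %| n).
Proof.
move=> cop_ab; have [b0|b_gt0] := posnP b.
  by move: cop_ab; rewrite b0 /coprime gcdn0 => /eqP->; rewrite exp1n eqxx dvd1n.
rewrite /mult_ord; set P := (fun i => _); set s := iota 0 b.
have has_P : has P s.
  apply/hasP; exists (totient b).-1; last first.
    by rewrite /P prednK ?totient_gt0 // Euler_exp_totient.
  by rewrite mem_iota add0n (leq_trans _ (totient_leq b)) // prednK ?totient_gt0.
have find_lt : find P s < b by rewrite -(size_iota 0 b) -has_find.
have ord_exp : a ^ (find P s).+1 = 1 %[mod b].
  by apply/eqP; have := nth_find 0 has_P; rewrite nth_iota.
set o := (find P s).+1 in ord_exp *.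
apply/idP/idP => [/eqP an1 | /dvdnP[c ->]]; last first.
  by rewrite mulnC expnM -modnXm ord_exp modnXm exp1n.
have : a ^ (n %% o) = 1 %[mod b].
  move: an1; rewrite {1}(divn_eq n o) expnD [_ %/ _ * _]mulnC expnM.
  by rewrite -modnMml -modnXm ord_exp modnXm exp1n modnMml mul1n.
rewrite /dvdn; case: (n %% o) (ltn_pmod n (ltn0Sn (find P s))) => [//|i].
rewrite ltnS => i_lt ai1; have := before_find 0 i_lt.
by rewrite nth_iota ?(ltn_trans i_lt find_lt) // add0n /P ai1 eqxx.
Qed.

Lemma sqrn_subn1 x : x ^ 2 - 1 = (x - 1) * (x + 1).
Proof. by rewrite -subn_sqr exp1n. Qed.

Lemma subn1_dvd_expn_subn1 x k : x - 1 %| x ^ k - 1.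
Proof. by rewrite -{2}(exp1n k) subn_exp dvdn_mulr. Qed.

Lemma odd_dvd_subn1_addn1 r x : odd r -> r %| x - 1 -> r %| x + 1 -> r = 1.
Proof.
move=> r_odd dvd_sub dvd_add; have r_dvd2 : r %| 2.
  case: x dvd_sub dvd_add => [|x] dvd_sub dvd_add; first exact: dvdn_trans dvd_add _.
  have <- : (x.+1 + 1) - (x.+1 - 1) = 2 by rewrite subSS subn0 addn1 -addn2 addKn.
  exact: dvdn_sub.
by move: (dvdn_leq (ltn0Sn 1) r_dvd2); case: r {dvd_sub dvd_add} r_odd r_dvd2 => [|[|[|]]].
Qed.

Lemma coprime_of_prime_ndvd m x :
  (forall r, prime r -> r %| m -> ~~ (r %| x)) -> coprime m x.
Proof.
move=> ndvd; apply/negPn/negP => not_cop.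
have [r r_pr] : exists2 r, prime r & r %| gcdn m x.
  have [->|g_gt0] := posnP (gcdn m x); first by exists 2; rewrite ?dvdn0.
  exists (pdiv (gcdn m x)); rewrite ?pdiv_dvd // pdiv_prime //.
  by rewrite ltn_neqAle eq_sym not_cop.
by rewrite dvdn_gcd => /andP[/(ndvd r r_pr)/negP].
Qed.

Lemma prime_dvdn_expn_addn1 p r n : prime r -> odd r -> coprime p r ->
  (r %| p ^ n + 1) = (mult_ord p r %| n.*2) && ~~ (mult_ord p r %| n).
Proof.
move=> r_pr r_odd cop_pr.
have p_gt0 : 0 < p.
  by case: p cop_pr => // /eqP; rewrite gcd0n => r1; rewrite r1 in r_pr.
have ord_dvd m : (mult_ord p r %| m) = (r %| p ^ m - 1).
  by rewrite -mult_ord_dvdP // eqn_mod_dvd // expn_gt0 p_gt0.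
have not_both : r %| p ^ n - 1 -> ~~ (r %| p ^ n + 1).
  move=> dvd_sub; apply/negP => /(odd_dvd_subn1_addn1 r_odd dvd_sub) r1.
  by rewrite r1 in r_pr.
rewrite !ord_dvd -muln2 expnM sqrn_subn1 Euclid_dvdM //.
apply/idP/andP => [dvd_add | [/orP[dvd_sub | //] nsub]].
  by split; [rewrite dvd_add orbT | apply: contraL dvd_add].
by rewrite dvd_sub in nsub.
Qed.

Lemma logn2_odd_mul_pow2 u s : odd u -> logn 2 (u * 2 ^ s) = s.
Proof.
move=> u_odd; rewrite lognM ?(odd_gt0 u_odd) ?expn_gt0 // pfactorK //.
by rewrite logn_coprime ?coprime2n.
Qed.

Lemma dvdn_odd_mul_pow2 o u s : odd u -> o %| u * 2 ^ s -> o %| u * 2 ^ logn 2 o.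
Proof.
move=> u_odd o_dvd.
have o_gt0 : 0 < o by apply: dvdn_gt0 o_dvd; rewrite muln_gt0 odd_gt0 ?expn_gt0.
have [v cop_2v Eo] := pfactor_coprime (isT : prime 2) o_gt0.
rewrite {1}Eo; apply: dvdn_mul (dvdnn _).
have : v %| u * 2 ^ s by apply: dvdn_trans o_dvd; rewrite Eo dvdn_mulr.
by rewrite Gauss_dvdl // coprimeXr // coprime_sym.
Qed.

Lemma logn2_of_dvd_double o n : 0 < n -> o %| n.*2 -> ~~ (o %| n) ->
  logn 2 o = (logn 2 n).+1.
Proof.
move=> n_gt0 o_dvd o_ndvd.
have [u u_odd En] := pfactor_coprime (isT : prime 2) n_gt0.
rewrite coprime2n in u_odd.
have o_dvd' : o %| u * 2 ^ (logn 2 n).+1 by rewrite expnS mulnCA -En mulnC muln2.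
apply/eqP; rewrite eqn_leq -[X in _ <= X](logn2_odd_mul_pow2 _ u_odd).
rewrite dvdn_leq_log ?muln_gt0 ?(odd_gt0 u_odd) ?expn_gt0 //= ltnNge.
apply: contra o_ndvd => le_o_n; rewrite En.
apply: dvdn_trans (dvdn_odd_mul_pow2 u_odd o_dvd') _.
exact: dvdn_mul (dvdnn u) (dvdn_exp2l 2 le_o_n).
Qed.

Lemma expn_odd_eq_mod p n d : odd n -> p ^ 2 = 1 %[mod d] -> p ^ n = p %[mod d].
Proof.
move=> n_odd sq; rewrite -(odd_double_half n) n_odd /= -mul2n expnS expnM.
by rewrite -modnMmr -modnXm sq modnXm exp1n modnMmr muln1.
Qed.

Lemma addn1_dvd_expn_odd_addn1 p n : odd n -> p + 1 %| p ^ n + 1.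
Proof.
move=> n_odd; have sq : p ^ 2 = 1 %[mod p + 1].
  case: p => [//|q]; apply/eqP.
  by rewrite eqn_mod_dvd ?expn_gt0 // sqrn_subn1 dvdn_mull.
by rewrite /dvdn -modnDml expn_odd_eq_mod // modnDml modnn.
Qed.

Lemma logn2_expn_odd_addn1 p n : odd p -> odd n ->
  logn 2 (p ^ n + 1) = logn 2 (p + 1).
Proof.
move=> p_odd n_odd; set v := logn 2 (p + 1).
have p_gt0 := odd_gt0 p_odd.
have p1_gt0 : 0 < p + 1 by rewrite addn1.
have pow_v_dvd : 2 ^ v %| p + 1 by rewrite pfactor_dvdn.
have sq : p ^ 2 = 1 %[mod 2 ^ v.+1].
  apply/eqP; rewrite eqn_mod_dvd ?expn_gt0 ?p_gt0 // sqrn_subn1 expnS.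
  by apply: dvdn_mul pow_v_dvd; rewrite dvdn2 oddB // p_odd.
have v_le : v <= logn 2 (p ^ n + 1).
  by apply: dvdn_leq_log; rewrite ?addn1_dvd_expn_odd_addn1 ?addn1.
have pow_v1_ndvd : ~~ (2 ^ v.+1 %| p ^ n + 1).
  rewrite /dvdn -modnDml expn_odd_eq_mod // modnDml -/(dvdn _ _).
  by rewrite pfactor_dvdn // ltnn.
apply/eqP; rewrite eqn_leq v_le andbT leqNgt; apply: contra pow_v1_ndvd.
by rewrite pfactor_dvdn // addn1.
Qed.

Lemma logn2_sqr_odd_addn1 x : odd x -> logn 2 (x ^ 2 + 1) = 1.
Proof.
move=> x_odd; rewrite -(odd_double_half x) x_odd.
have -> : (true + x./2.*2) ^ 2 + 1 = (x./2 * x./2 + x./2).*2.+1 * 2 ^ 1.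
  by rewrite /= -!muln2; nia.
by rewrite logn2_odd_mul_pow2 //= odd_double.
Qed.

Lemma dvdn_addn1_of_dvdn_exp2_subn1 m w t : odd m ->
  (forall r, prime r -> r %| m -> r %| w + 1) -> m %| w ^ 2 ^ t - 1 ->
  m %| w + 1.
Proof.
move=> m_odd r_dvd.
have prime_ndvd r y : prime r -> r %| m -> r %| y - 1 -> ~~ (r %| y + 1).
  move=> r_pr r_m r_sub; apply/negP.
  by move/(odd_dvd_subn1_addn1 (dvdn_odd r_m m_odd) r_sub) => r1; rewrite r1 in r_pr.
have cop_sub : coprime m (w - 1).
  apply: coprime_of_prime_ndvd => r r_pr r_m; apply: contraL (r_dvd r r_pr r_m).
  exact: prime_ndvd.
have cop_add j : 0 < j -> coprime m (w ^ 2 ^ j + 1).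
  move=> j_gt0; apply: coprime_of_prime_ndvd => r r_pr r_m; apply: prime_ndvd => //.
  rewrite -(prednK j_gt0) expnS expnM.
  apply: dvdn_trans (subn1_dvd_expn_subn1 _ _).
  by rewrite sqrn_subn1 dvdn_mull // r_dvd.
elim: t => [|t IH].
  rewrite expn0 expn1 => m_dvd.
  by move: cop_sub; rewrite /coprime (gcdn_idPl m_dvd) => /eqP->.
rewrite expnSr expnM sqrn_subn1.
case: t IH => [|t] IH; first by rewrite expn0 expn1 Gauss_dvdr.
by rewrite Gauss_dvdl ?cop_add.
Qed.

Lemma Uk_of_dvdn p n d : prime p -> 0 < d -> 0 < n -> d %| p ^ n + 1 ->
  Uk p (logn 2 n).+1 d.
Proof.
move=> p_pr d_gt0 n_gt0 d_dvd.
have cop_dp : coprime d p.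
  apply: coprime_dvdl d_dvd _.
  by rewrite coprime_sym /coprime -(prednK n_gt0) expnSr gcdnMDl gcdn1.
have v2d_le : logn 2 d <= logn 2 (p ^ n + 1) by apply: dvdn_leq_log d_dvd; rewrite addn1.
have p_odd : 2 < p -> odd p.
  by move=> p_gt2; case/even_prime: p_pr => // p2; rewrite p2 in p_gt2.
have [u u_odd En] := pfactor_coprime (isT : prime 2) n_gt0.
rewrite coprime2n in u_odd.
split=> // [r r_pr r_odd r_dvd | p_gt2 /eqP | p_gt2 v2n_gt0].
- have cop_pr : coprime p r by rewrite coprime_sym (coprime_dvdl r_dvd cop_dp).
  have := prime_dvdn_expn_addn1 n r_pr r_odd cop_pr.
  rewrite (dvdn_trans r_dvd d_dvd) => /esym/andP[o_dvd o_ndvd].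
  exact: logn2_of_dvd_double.
- rewrite eqSS => /eqP v2n0; rewrite En v2n0 expn0 muln1 in v2d_le.
  by rewrite -[p.+1]addn1 (leq_trans v2d_le) // logn2_expn_odd_addn1 ?p_odd.
- rewrite En -(prednK v2n_gt0) expnSr mulnA expnM in v2d_le.
  by rewrite (leq_trans v2d_le) // logn2_sqr_odd_addn1 // oddX p_odd ?orbT.
Qed.

Lemma dvdn_expn_addn1_of_mult_ord p m k u s : odd m -> coprime m p -> 0 < k ->
  odd u -> totient m = u * 2 ^ s ->
  (forall r, prime r -> r %| m -> logn 2 (mult_ord p r) = k) ->
  m %| p ^ (u * 2 ^ k.-1) + 1.
Proof.
move=> m_odd cop_mp k_gt0 u_odd Et ord_k.
have p_tot : p ^ totient m = 1 %[mod m].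
  by apply: Euler_exp_totient; rewrite coprime_sym.
have n_gt0 : 0 < u * 2 ^ k.-1 by rewrite muln_gt0 odd_gt0 ?expn_gt0.
have double_n : (u * 2 ^ k.-1).*2 = u * 2 ^ k by rewrite -muln2 -mulnA -expnSr prednK.
apply: (@dvdn_addn1_of_dvdn_exp2_subn1 _ _ s.+1) => // [r r_pr r_dvd |].
- have cop_pr : coprime p r by rewrite coprime_sym (coprime_dvdl r_dvd cop_mp).
  rewrite prime_dvdn_expn_addn1 ?(dvdn_odd r_dvd m_odd) // double_n.
  apply/andP; split.
    rewrite -(ord_k r r_pr r_dvd); apply: (@dvdn_odd_mul_pow2 _ _ s u_odd).
    by rewrite -Et -mult_ord_dvdP // -(modn_dvdm _ r_dvd) p_tot modn_dvdm.
  apply/negP => /(dvdn_leq_log 2 n_gt0).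
  by rewrite logn2_odd_mul_pow2 // ord_k // leqNgt ltn_predL k_gt0.
- rewrite -expnM (_ : _ * _ = totient m * 2 ^ k); last first.
    by rewrite Et -!mulnA -!expnD addnS -addSn prednK // addnC.
  rewrite expnM; have [->|?] := posnP ((p ^ totient m) ^ 2 ^ k); first exact: dvdn0.
  by rewrite -eqn_mod_dvd // -modnXm p_tot modnXm exp1n.
Qed.

Lemma U_of_Uk p k d : prime p -> 0 < k -> Uk p k d -> U p d.
Proof.
move=> p_pr k_gt0 [d_gt0 cop_dp ord_k v2_k1 v2_k2].
have [m m_odd Ed] := pfactor_coprime (isT : prime 2) d_gt0.
rewrite coprime2n in m_odd; set a := logn 2 d in Ed v2_k1 v2_k2.
have m_dvd : m %| d by rewrite Ed dvdn_mulr.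
have m_gt0 := odd_gt0 m_odd.
have [u u_odd Et] : {u | coprime 2 u & totient m = u * 2 ^ logn 2 (totient m)}.
  by apply: pfactor_coprime; rewrite ?totient_gt0.
rewrite coprime2n in u_odd; set n := u * 2 ^ k.-1.
have m_dvd_n : m %| p ^ n + 1.
  apply: dvdn_expn_addn1_of_mult_ord Et _ => // [|r r_pr r_m].
    exact: coprime_dvdl m_dvd cop_dp.
  exact: ord_k (dvdn_odd r_m m_odd) (dvdn_trans r_m m_dvd).
have pow2_dvd_n : 2 ^ a %| p ^ n + 1.
  have [-> | a_gt0] := posnP a; first exact: dvd1n.
  have p_odd : odd p.
    rewrite -coprime2n; apply: coprime_dvdl cop_dp.
    by rewrite Ed dvdn_mull // (dvdn_exp2l 2 a_gt0).
  have p_gt2 := odd_prime_gt2 p_odd p_pr.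
  have [k1 | k_gt1] := eqVneq k 1.
    rewrite /n k1 expn0 muln1 pfactor_dvdn ?addn_gt0 ?orbT //.
    by rewrite logn2_expn_odd_addn1 // addn1 v2_k1.
  apply: dvdn_trans (dvdn_exp2l 2 (v2_k2 p_gt2 _)) _.
    by rewrite ltn_neqAle eq_sym k_gt1.
  by rewrite dvdn2 addn1 /= oddX p_odd orbT.
split=> //; exists n; split; first by rewrite muln_gt0 odd_gt0 ?expn_gt0.
by rewrite Ed Gauss_dvd ?m_dvd_n ?pow2_dvd_n // coprimeXr // coprime_sym coprime2n.
Qed.

Theorem lemma2 (p : nat) : prime p ->
  forall d : nat, U p d <-> exists2 k, 0 < k & Uk p k d.
Proof.
move=> p_pr d; split=> [[d_gt0 [n [n_gt0 d_dvd]]] | [k k_gt0]].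
  by exists (logn 2 n).+1; last exact: Uk_of_dvdn.
exact: U_of_Uk.
Qed.
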